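(* Under Assumption 1 and the normalization $p_0=1$, the log-utility of the representative household at the equilibrium $(\bar x,\bar p,\bar y)$ of $\mathcal{E}(\lambda,a)$ is $$V(a,\lambda)=\log u(\bar x_0)=\log(\bar v_0)+\sum_{i\in M}a_{0,i}\log a_{0,i}+a_0^T(I-A)^{-1}u+a_0^T(I-A)^{-1}D\log(\bar v),$$ where $\bar v_0=1+\sum_{i\in M}\varepsilon_i\bar v_i$ is household income, $u_i=\log\lambda_i(a_i)+\sum_{j\in N}a_{i,j}\log a_{i,j}$ and $D=\mathrm{diag}(\sum_{j\in N}a_{i,j}-1)_{i\in M}$.
   Context: Same economy as follows. Household $0$, firms $M=\{1,\dots,m\}$, $N=M\cup\{0\}$ (index 0 also labor, sector 0, $M_0=\{0\}$). Household: one unit of labor, receives all profits, utility $u(x_0)=\prod_{j\in M}x_{0,j}^{a_{0,j}}$, $a_0\ge0$, $\sum a_{0,j}=1$. Firm $i$: requirements $b_i\ge0$, $\sum_\ell b_{i,\ell}\le1$; input shares $a_i\in\mathbb{R}^N_+$ with $\sum_{j\in M_\ell}a_{i,j}=b_{i,\ell}$; production $f_{a,i}(x_i)=\lambda_i(a_i)\prod_{j\in N}x_{i,j}^{a_{i,j}}$; $\varepsilon_i=1-\sum_{j\in N}a_{i,j}$. $A=(a_{i,j})_{i,j\in M}$. General equilibrium: firms maximize profit, household maximizes utility under its budget (labor income plus all profits), all markets clear, labor supply $1$. $\bar v_i=\bar p_i\bar y_i$ denotes equilibrium revenue of firm $i$; $0\log0=0$. Assumption 1: $a_0\in\mathbb{R}^M_{++}$;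 $b_{i,0}>0$ for all $i$; some firm has a positive requirement in some non-labor sector. *)

From HB Require Import structures.
From mathcomp Require Import all_boot all_order all_algebra.
From mathcomp Require Import all_classical all_reals all_analysis.
Set Implicit Arguments. Unset Strict Implicit. Unset Printing Implicit Defensive.
Import Order.TTheory GRing.Theory Num.Theory.
Local Open Scope ring_scope.

(* Indexing conventions.
   - Firms M = {1,...,m} are represented by 'I_m.
   - N = M ∪ {0} is represented by 'I_m.+1: index ord0 is labor (the
     household), and firm i : 'I_m corresponds to  firm i := lift ord0 i.
   - Non-labor sectors 1..L are represented by 'I_L; sector indices
     {0,...,L} by 'I_L.+1, where sector 0 (ord0) is labor, M_0 = {0}, and
     non-labor sector l : 'I_L is lift ord0 l.  sec j is the sector of firm j. *)

Definition firm {m : nat} (i : 'I_m) : 'I_m.+1 := lift ord0 i.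
Definition sect {L : nat} (l : 'I_L) : 'I_L.+1 := lift ord0 l.

Section Economy.
Variable R : realType.
Variables (m L : nat).

Definition xlogx (t : R) : R := if t == 0 then 0 else t * ln t.

Definition utility (a0 : 'I_m -> R) (x0 : 'I_m -> R) : R :=
  \prod_(j < m) (x0 j) `^ (a0 j).

Definition prod_fun (lam : R) (ai : 'I_m.+1 -> R) (xi : 'I_m.+1 -> R) : R :=
  lam * \prod_(j < m.+1) (xi j) `^ (ai j).

Definition eps (a : 'I_m -> 'I_m.+1 -> R) (i : 'I_m) : R :=
  1 - \sum_(j < m.+1) a i j.

(* Standing structure of the economy (technology shares compatible with
   requirements) together with Assumption 1. *)
Definition economy_ok (sec : 'I_m -> 'I_L) (b : 'I_m -> 'I_L.+1 -> R)
  (a0 : 'I_m -> R) (a : 'I_m -> 'I_m.+1 -> R) (lam : 'I_m -> R) : Prop :=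
  ((forall j, 0 <= a0 j) /\ \sum_(j < m) a0 j = 1) /\
  ((forall i l, 0 <= b i l) /\ (forall i, \sum_(l < L.+1) b i l <= 1)) /\
  (forall i j, 0 <= a i j) /\
  (forall i, a i ord0 = b i ord0) /\
  (forall i (l : 'I_L), \sum_(j < m | sec j == l) a i (firm j) = b i (sect l)) /\
  (forall i, 0 < lam i) /\
  (* Assumption 1 *)
  ((forall j, 0 < a0 j) /\ (forall i, 0 < b i ord0) /\
   exists i (l : 'I_L), 0 < b i (sect l)).

(* General equilibrium (x, p, y) of E(lambda, a).
   p : prices over N (p ord0 is the wage), y : outputs of firms,
   x : inputs of firms (x i j, j in N), x0 : household consumption over M. *)
Definition profit (lam : 'I_m -> R) (a : 'I_m -> 'I_m.+1 -> R)
  (p : 'I_m.+1 -> R) (i : 'I_m) (xi : 'I_m.+1 -> R) : R :=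
  p (firm i) * prod_fun (lam i) (a i) xi - \sum_(j < m.+1) p j * xi j.

Definition equilibrium (a0 : 'I_m -> R) (a : 'I_m -> 'I_m.+1 -> R)
  (lam : 'I_m -> R) (x0 : 'I_m -> R) (x : 'I_m -> 'I_m.+1 -> R)
  (p : 'I_m.+1 -> R) (y : 'I_m -> R) : Prop :=
  let income := p ord0 * 1 + \sum_(i < m) profit lam a p i (x i) in
  (forall j, 0 <= p j) /\
  ((forall i j, 0 <= x i j) /\ (forall j, 0 <= x0 j)) /\
  [/\
      (forall i, y i = prod_fun (lam i) (a i) (x i)),
      (forall i (xi : 'I_m.+1 -> R), (forall j, 0 <= xi j) ->
          profit lam a p i xi <= profit lam a p i (x i)),
      \sum_(j < m) p (firm j) * x0 j <= income &
      [/\ (forall x0' : 'I_m -> R, (forall j, 0 <= x0' j) ->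
             \sum_(j < m) p (firm j) * x0' j <= income ->
             utility a0 x0' <= utility a0 x0),
          (forall j, x0 j + \sum_(i < m) x i (firm j) = y j) &
          \sum_(i < m) x i ord0 = 1]].

Definition Amx (a : 'I_m -> 'I_m.+1 -> R) : 'M[R]_m :=
  \matrix_(i, j) a i (firm j).

Definition uvec (a : 'I_m -> 'I_m.+1 -> R) (lam : 'I_m -> R) : 'cV[R]_m :=
  \col_i (ln (lam i) + \sum_(j < m.+1) xlogx (a i j)).

Definition Dmx (a : 'I_m -> 'I_m.+1 -> R) : 'M[R]_m :=
  diag_mx (\row_i (\sum_(j < m.+1) a i j - 1)).

End Economy.

From HB Require Import structures.
From mathcomp Require Import all_boot all_order all_algebra.
From mathcomp Require Import all_classical all_reals all_analysis.
From mathcomp Require Import ring lra.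
Import Order.TTheory GRing.Theory Num.Theory.
Set Implicit Arguments. Unset Strict Implicit.
Local Open Scope ring_scope.

(* Everything follows from the Cobb-Douglas first-order conditions. A
   profit-maximizing firm spends the share a_{i,j} of its revenue v_i on input
   j, so its profit is eps_i v_i and household income is v_0. Taking logs in
   y_i = lambda_i prod_j x_{i,j}^{a_{i,j}} with x_{i,j} = a_{i,j} v_i / p_j
   gives the linear system (I - A) log p = - u - D log v, which is solvable
   because every row of A sums to at most 1 - b_{i,0} < 1.  The household
   spends the share a_{0,j} of its income on good j, so by Jensen's inequality
   its indirect log-utility is log v_0 + sum_j a_{0,j} log a_{0,j}
   - a_0^T log p, and substituting log p gives the formula. *)

Section LogInequalities.
Variable R : realType.

Lemma ln_prod (I : finType) (f : I -> R) : (forall i, 0 < f i) ->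
  ln (\prod_i f i) = \sum_i ln (f i).
Proof.
move=> f_gt0; pose K (s q : R) := 0 < q /\ ln q = s.
suff [] : K (\sum_i ln (f i)) (\prod_i f i) by [].
apply: (big_rec2 K); first by split; [exact: ltr01 | exact: ln1].
move=> i s q _ [q_gt0 <-]; split; first by rewrite mulr_gt0.
by rewrite lnM ?posrE.
Qed.

Lemma ln_le_subr1 (t : R) : 0 < t -> ln t <= t - 1.
Proof.
move=> t_gt0; have := @le_ln1Dx R (t - 1).
by rewrite [1 + _]addrC subrK; apply; lra.
Qed.

Section WeightedSum.
Variables (n : nat) (w : 'I_n -> R).
Hypotheses (w_gt0 : forall j, 0 < w j) (w_sum1 : \sum_j w j = 1).

Lemma wsum_gt0 (z : 'I_n -> R) : (forall j, 0 < z j) -> 0 < \sum_j w j * z j.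
Proof.
move=> z_gt0; case: n w w_gt0 w_sum1 z z_gt0 => [|k] w' w'_gt0 w'_sum1 z z_gt0.
  by move: w'_sum1; rewrite big_ord0 => /eqP; rewrite eq_sym oner_eq0.
rewrite (bigD1 ord0) //=.
have : 0 <= \sum_(j | j != ord0) w' j * z j.
  by apply: sumr_ge0 => j _; rewrite mulr_ge0 ?ltW.
have := mulr_gt0 (w'_gt0 ord0) (z_gt0 ord0); lra.
Qed.

Lemma wsum_ln_le_ln_wsum (z : 'I_n -> R) : (forall j, 0 < z j) ->
  \sum_j w j * ln (z j) <= ln (\sum_j w j * z j).
Proof.
move=> z_gt0; set M := \sum_j w j * z j.
have M_gt0 : 0 < M by exact: wsum_gt0.
rewrite -subr_le0.
have -> : ln M = \sum_j w j * ln M by rewrite -mulr_suml w_sum1 mul1r.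
rewrite -sumrB; apply: (@le_trans _ _ (\sum_j w j * (z j / M - 1))).
  apply: ler_sum => j _; rewrite -mulrBr ler_pM2l // -ln_div ?posrE //.
  exact/ln_le_subr1/divr_gt0.
rewrite (eq_bigr (fun j => w j * z j / M - w j)); last first.
  by move=> j _; rewrite mulrBr mulr1 mulrA.
by rewrite sumrB -mulr_suml w_sum1 divff ?subrr // gt_eqF.
Qed.

End WeightedSum.
End LogInequalities.

Section CobbDouglasFirm.
Variable R : realType.

Lemma powR_sub_linear_max_foc (K c e x : R) : 0 < x -> 0 <= e ->
  (forall t : R, 0 < t -> K * t `^ e - c * t <= K * x `^ e - c * x) ->
  K * e * x `^ e = c * x.
Proof.
move=> x_gt0 e_ge0 x_max; pose f t := K * t `^ e - c * t.
have f' (t : R) : 0 < t -> is_derive t 1 f (K * (e * t `^ (e - 1)) - c).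
  move=> t_gt0; have := is_deriveB (is_deriveZ K (is_derive1_powR e t_gt0))
    (is_deriveZ c (@is_derive_id _ _ t 1)).
  have -> : f = K \*: (powR (R:=R))^~ e - c \*: id by apply/funext.
  by move=> df; apply: is_derive_eq df _; rewrite /GRing.scale /= mulr1.
have x_in : x \in `]0, 2 * x[%R by rewrite in_itv /=; apply/andP; split; lra.
have f'x0 : is_derive x 1 f 0.
  apply: (derive1_at_max _ _ x_in) => [|t|t]; first lra.
    by rewrite in_itv /= => /andP[t_gt0 _]; case: (f' t t_gt0).
  by rewrite in_itv /= => /andP[t_gt0 _]; exact: x_max.
have {f'x0} c_eq : c = K * (e * x `^ (e - 1)).
  apply/eqP; rewrite eq_sym -subr_eq0.
  by rewrite -(@derive_val _ _ _ _ _ _ _ (f' x x_gt0)) (@derive_val _ _ _ _ _ _ _ f'x0).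
rewrite c_eq; have [->|e_neq0] := eqVneq e 0; first by rewrite !(mulr0, mul0r).
rewrite -!mulrA; congr (_ * (_ * _)).
by rewrite mulrC mulr_powRB1 // ?ltW // lt_def e_neq0.
Qed.

(* Optimizing over the j-th input alone, the profit has the shape
   K t^(a_j) - p_j t studied above. *)
Lemma cobb_douglas_expenditure_share n (lam pi : R) (ai xi p : 'I_n -> R) :
  (forall j, 0 <= ai j) -> (forall j, 0 <= xi j) ->
  (forall xi' : 'I_n -> R, (forall j, 0 <= xi' j) ->
     pi * (lam * \prod_j xi' j `^ ai j) - \sum_j p j * xi' j <=
     pi * (lam * \prod_j xi j `^ ai j) - \sum_j p j * xi j) ->
  forall j, p j * xi j = ai j * (pi * (lam * \prod_k xi k `^ ai k)).
Proof.
move=> ai_ge0 xi_ge0 xi_max j.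
have [xij0|xij_neq0] := eqVneq (xi j) 0.
  rewrite xij0 mulr0; have [->|aij_neq0] := eqVneq (ai j) 0; first by rewrite mul0r.
  by rewrite (bigD1 j) //= xij0 powR0 // !(mul0r, mulr0).
have xij_gt0 : 0 < xi j by rewrite lt_def xij_neq0 xi_ge0.
pose P := \prod_(k | k != j) xi k `^ ai k.
pose S := \sum_(k | k != j) p k * xi k.
pose xt t k := if k == j then t else xi k.
have xt_profit t : pi * (lam * \prod_k xt t k `^ ai k) - \sum_k p k * xt t k
    = (pi * lam * P) * t `^ ai j - p j * t - S.
  have xtP : \prod_(k | k != j) xt t k `^ ai k = P.
    by apply: eq_bigr => k /negbTE; rewrite /xt => ->.
  have xtS : \sum_(k | k != j) p k * xt t k = S.
    by apply: eq_bigr => k /negbTE; rewrite /xt => ->.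
  by rewrite (bigD1 j) //= (bigD1 j (P := xpredT)) //= xtP xtS /xt eqxx; ring.
have xt_xi : xt (xi j) = xi by apply/funext => k; rewrite /xt; case: eqP => // ->.
suff share : pi * lam * P * ai j * xi j `^ ai j = p j * xi j.
  by rewrite (bigD1 j) //= -share /P; ring.
apply: powR_sub_linear_max_foc xij_gt0 (ai_ge0 j) _ => t t_gt0.
have xt_ge0 k : 0 <= xt t k by rewrite /xt; case: eqP => // _; exact: ltW.
have := xi_max (xt t) xt_ge0; have := xt_profit (xi j).
by rewrite xt_xi xt_profit; lra.
Qed.

End CobbDouglasFirm.

Definition ln_indirect_utility (R : realType) n (w q : 'I_n -> R) (I : R) : R :=
  ln I + \sum_j xlogx (w j) - \sum_j w j * ln (q j).

Section CobbDouglasHousehold.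
Variables (R : realType) (n : nat) (w q : 'I_n -> R) (I : R).
Hypotheses (w_gt0 : forall j, 0 < w j) (w_sum1 : \sum_j w j = 1).
Hypotheses (q_ge0 : forall j, 0 <= q j) (I_gt0 : 0 < I).

Lemma ln_utility (z : 'I_n -> R) : (forall j, 0 < z j) ->
  ln (utility w z) = \sum_j w j * ln (z j).
Proof.
move=> z_gt0; rewrite /utility ln_prod => [|j]; last exact: powR_gt0.
by apply: eq_bigr => j _; rewrite ln_powR.
Qed.

Lemma utility_gt0 (z : 'I_n -> R) : (forall j, 0 < z j) -> 0 < utility w z.
Proof. by move=> z_gt0; apply: prodr_gt0 => j _; exact: powR_gt0. Qed.

Definition utility_max (z : 'I_n -> R) := forall z' : 'I_n -> R,
  (forall j, 0 <= z' j) -> \sum_j q j * z' j <= I -> utility w z' <= utility w z.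

Section Optimum.
Variable x : 'I_n -> R.
Hypotheses (x_ge0 : forall j, 0 <= x j) (x_budget : \sum_j q j * x j <= I).
Hypothesis x_max : utility_max x.

(* The bundle with I / (1 + sum_j q_j) units of every good is affordable and
   has positive utility, so x has positive utility too. *)
Lemma utility_max_gt0 j : 0 < x j.
Proof.
pose S := \sum_j q j; have S_ge0 : 0 <= S by exact: sumr_ge0.
pose d : 'I_n -> R := fun=> I / (1 + S).
have d_gt0 i : 0 < d i by rewrite divr_gt0 //; lra.
have d_budget : \sum_j q j * d j <= I.
  rewrite -mulr_suml -/S mulrA ler_pdivrMr; last lra.
  by rewrite mulrC ler_pM2l // lerDr.
have ux_gt0 : 0 < utility w x.
  apply: lt_le_trans (utility_gt0 d_gt0) _.
  exact: x_max (fun i => ltW (d_gt0 i)) d_budget.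
rewrite lt_def x_ge0 andbT; apply: contraTneq ux_gt0 => xj0.
by rewrite /utility (bigD1 j) //= xj0 powR0 ?mul0r ?ltxx // gt_eqF.
Qed.

(* A free good could be consumed in larger quantity at no cost. *)
Lemma utility_max_prices_gt0 k : 0 < q k.
Proof.
rewrite lt_def q_ge0 andbT; apply/negP => /eqP qk0.
pose x' j := x j + (j == k)%:R.
have x'_gt0 j : 0 < x' j by rewrite /x' ltr_wpDr ?ler0n ?utility_max_gt0.
have x'_budget : \sum_j q j * x' j <= I.
  rewrite (eq_bigr (fun j => q j * x j)) // => j _.
  by rewrite /x'; case: eqVneq => [->|]; rewrite ?qk0 ?mul0r ?addr0.
have := x_max (fun j => ltW (x'_gt0 j)) x'_budget.
have x_gt0 := utility_max_gt0.
rewrite -ler_ln ?posrE ?utility_gt0 // !ln_utility //.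
rewrite (bigD1 k) //= [leRHS](bigD1 k) //=.
under eq_bigr => j /negbTE jk do rewrite /x' jk addr0.
have := x'_gt0 k; rewrite /x' eqxx /= => xk1_gt0.
rewrite lerD2r ler_pM2l // ler_ln ?posrE //; lra.
Qed.

Lemma ln_utility_le_indirect : ln (utility w x) <= ln_indirect_utility w q I.
Proof.
have x_gt0 := utility_max_gt0; have q_gt0 := utility_max_prices_gt0.
pose z j := q j * x j / w j.
have z_gt0 j : 0 < z j by rewrite /z divr_gt0 // mulr_gt0.
have z_sum : \sum_j w j * z j = \sum_j q j * x j.
  by apply: eq_bigr => j _; rewrite /z mulrC divfK // gt_eqF.
have z_ln : \sum_j w j * ln (z j) =
    \sum_j w j * ln (x j) + \sum_j w j * ln (q j) - \sum_j xlogx (w j).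
  rewrite -big_split -sumrB /=; apply: eq_bigr => j _.
  rewrite /z /xlogx gt_eqF // ln_div ?posrE ?mulr_gt0 // lnM ?posrE //; ring.
have := wsum_ln_le_ln_wsum w_gt0 w_sum1 z_gt0; rewrite z_sum z_ln.
have : ln (\sum_j q j * x j) <= ln I.
  by rewrite ler_ln ?posrE // -z_sum wsum_gt0.
rewrite ln_utility // /ln_indirect_utility; lra.
Qed.

End Optimum.

Section Demand.
Hypothesis q_gt0 : forall j, 0 < q j.

Definition demand j := w j * I / q j.

Lemma demand_gt0 j : 0 < demand j.
Proof. by rewrite /demand divr_gt0 // mulr_gt0. Qed.

Lemma demand_budget : \sum_j q j * demand j <= I.
Proof.
rewrite (eq_bigr (fun j => w j * I)) => [|j _]; last first.
  by rewrite /demand mulrC divfK // gt_eqF.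
by rewrite -mulr_suml w_sum1 mul1r.
Qed.

Lemma ln_utility_demand : ln (utility w demand) = ln_indirect_utility w q I.
Proof.
rewrite ln_utility; last exact: demand_gt0.
rewrite /ln_indirect_utility.
have -> : ln I = \sum_j w j * ln I by rewrite -mulr_suml w_sum1 mul1r.
rewrite -big_split -sumrB /=; apply: eq_bigr => j _.
rewrite /demand /xlogx gt_eqF // ln_div ?posrE ?mulr_gt0 // lnM ?posrE //; ring.
Qed.

End Demand.

Lemma ln_utility_max (x : 'I_n -> R) : (forall j, 0 <= x j) ->
  \sum_j q j * x j <= I -> utility_max x ->
  ln (utility w x) = ln_indirect_utility w q I.
Proof.
move=> x_ge0 x_budget x_max; have q_gt0 := utility_max_prices_gt0 x_ge0 x_budget x_max.
apply/le_anti; rewrite ln_utility_le_indirect // -(ln_utility_demand q_gt0).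
rewrite ler_ln ?posrE ?utility_gt0 //; last exact: utility_max_gt0.
  exact: x_max _ (fun j => ltW (demand_gt0 q_gt0 j)) (demand_budget q_gt0).
exact: demand_gt0.
Qed.

End CobbDouglasHousehold.

Section Leontief.
Variables (R : realType) (n : nat) (A : 'M[R]_n).
Hypotheses (A_ge0 : forall i j, 0 <= A i j) (A_rows : forall i, \sum_j A i j < 1).

(* A fixed row [w = w A^T] satisfies max |w| <= rho max |w| with rho < 1 the
   largest row sum of A. *)
Lemma substochastic_fixed_row_eq0 (w : 'rV[R]_n) :
  (forall i, w 0 i = \sum_j w 0 j * A i j) -> w = 0.
Proof.
move=> w_fixed.
pose M := \big[Order.max/0]_j `|w 0 j|.
pose rho := \big[Order.max/0]_i \sum_j A i j.
have M_ge0 : 0 <= M.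
  elim/big_ind: M => [//|s t s_ge0 _|j _]; [by rewrite le_max s_ge0|exact: normr_ge0].
have rho_ge0 : 0 <= rho.
  elim/big_ind: rho => [//|s t s_ge0 _|i _]; first by rewrite le_max s_ge0.
  exact: sumr_ge0.
have rho_lt1 : rho < 1 by apply: bigmax_lt => //; exact: ltr01.
have M_le : M <= M * rho.
  apply: bigmax_le; first by rewrite mulr_ge0.
  move=> i _; rewrite w_fixed; apply: le_trans (ler_norm_sum _ _ _) _.
  apply: (@le_trans _ _ (\sum_j M * A i j)).
    apply: ler_sum => j _; rewrite normrM (ger0_norm (A_ge0 i j)) ler_wpM2r //.
    exact: le_bigmax.
  rewrite -mulr_sumr ler_wpM2l //; exact: (le_bigmax _ (fun i => \sum_j A i j)).
have M0 : M = 0 by nra.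
apply/rowP => i; rewrite mxE; apply/eqP; rewrite -normr_le0 -M0.
exact: le_bigmax.
Qed.

Lemma unitmx_1_sub_substochastic : 1%:M - A \in unitmx.
Proof.
rewrite -unitmx_tr -row_free_unit -kermx_eq0; apply/eqP/matrixP => r c.
set w := row r (kermx (1%:M - A)^T).
have w_ker : w *m (1%:M - A)^T = 0 by rewrite -row_mul mulmx_ker row0.
have w_fixed : w = w *m A^T.
  apply/eqP; rewrite -subr_eq0 -[X in X - _]mulmx1 -mulmxBr.
  by rewrite -[1%:M]trmx1 -linearB /= w_ker.
suff w0 : w = 0.
  by have := congr1 (fun u : 'rV_n => u 0 c) w0; rewrite /w !mxE.
apply: (substochastic_fixed_row_eq0 (w := w)) => i.
by rewrite {1}w_fixed mxE; apply: eq_bigr => j _; rewrite [A^T _ _]mxE.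
Qed.

End Leontief.

Section Equilibrium.
Variables (R : realType) (m L : nat) (sec : 'I_m -> 'I_L).
Variables (b : 'I_m -> 'I_L.+1 -> R) (a0 : 'I_m -> R) (a : 'I_m -> 'I_m.+1 -> R).
Variables (lam : 'I_m -> R) (x0 : 'I_m -> R) (x : 'I_m -> 'I_m.+1 -> R).
Variables (p : 'I_m.+1 -> R) (y : 'I_m -> R).
Hypothesis eco : economy_ok sec b a0 a lam.
Hypothesis equi : equilibrium a0 a lam x0 x p y.
Hypothesis p01 : p ord0 = 1.

Local Notation revenue i := (p (firm i) * y i).
Local Notation income := (1 + \sum_(i < m) eps a i * revenue i).
Local Notation firm_prices := (fun j : 'I_m => p (firm j)).

Let a0_gt0 j : 0 < a0 j. Proof. by case: eco => _ [_ [_ [_ [_ [_ []]]]]]. Qed.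
Let a0_sum1 : \sum_j a0 j = 1. Proof. by case: eco => [[]]. Qed.
Let a_ge0 i j : 0 <= a i j. Proof. by case: eco => _ [_ []]. Qed.
Let lam_gt0 i : 0 < lam i. Proof. by case: eco => _ [_ [_ [_ [_ []]]]]. Qed.

Let p_ge0 j : 0 <= p j. Proof. by case: equi. Qed.
Let x_ge0 i j : 0 <= x i j. Proof. by case: equi => _ [[]]. Qed.
Let x0_ge0 j : 0 <= x0 j. Proof. by case: equi => _ [[]]. Qed.
Let y_def i : y i = prod_fun (lam i) (a i) (x i). Proof. by case: equi => _ [_ []]. Qed.
Let x_max i (xi : 'I_m.+1 -> R) : (forall j, 0 <= xi j) ->
  profit lam a p i xi <= profit lam a p i (x i).
Proof. by case: equi => _ [_ [_ max _ _]]; exact: max. Qed.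
Let goods_clear j : x0 j + \sum_i x i (firm j) = y j.
Proof. by case: equi => _ [_ [_ _ _ []]]. Qed.

Lemma unitmx_1_sub_Amx : 1%:M - Amx a \in unitmx.
Proof.
have [_ [[_ b_sum] [_ [_ [a_sector [_ [_ [b_labor_gt0 _]]]]]]]] := eco.
apply: unitmx_1_sub_substochastic => [i j|i]; rewrite ?mxE //.
under eq_bigr do rewrite mxE.
have -> : \sum_j a i (firm j) = \sum_(l < L) b i (sect l).
  by rewrite (partition_big sec xpredT) //=; apply: eq_bigr => l _; exact: a_sector.
have b_split : \sum_(l < L.+1) b i l = b i ord0 + \sum_(l < L) b i (sect l).
  by rewrite big_ord_recl.
have := b_sum i; have := b_labor_gt0 i; lra.
Qed.

Lemma expenditure_share i j : p j * x i j = a i j * revenue i.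
Proof.
rewrite y_def; apply: cobb_douglas_expenditure_share => // xi xi_ge0.
exact: x_max.
Qed.

Lemma profit_share i : profit lam a p i (x i) = eps a i * revenue i.
Proof.
rewrite /profit -y_def (eq_bigr _ (fun j _ => expenditure_share i j)).
by rewrite -mulr_suml /eps; ring.
Qed.

Lemma income_eq : income = p ord0 * 1 + \sum_(i < m) profit lam a p i (x i).
Proof. by rewrite p01 mulr1 (eq_bigr _ (fun i _ => profit_share i)). Qed.

(* Each firm can secure a nonnegative profit by producing nothing. *)
Lemma income_gt0 : 0 < income.
Proof.
rewrite income_eq p01 mulr1.
suff : 0 <= \sum_(i < m) profit lam a p i (x i) by lra.
apply: sumr_ge0 => i _; apply: le_trans (x_max i (fun=> lexx (0 : R))).
rewrite /profit big1 ?subr0 => [|j _]; last by rewrite mulr0.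
apply: mulr_ge0 => //; apply: mulr_ge0; first exact: ltW (lam_gt0 i).
by apply: prodr_ge0 => j _; exact: powR_ge0.
Qed.

Let household_budget : \sum_j p (firm j) * x0 j <= income.
Proof. by rewrite income_eq; case: equi => _ [_ []]. Qed.

Let household_max : utility_max a0 firm_prices income x0.
Proof. by rewrite income_eq; case: equi => _ [_ [_ _ _ []]]. Qed.

Lemma ln_utility_consumption :
  ln (utility a0 x0) = ln_indirect_utility a0 firm_prices income.
Proof.
exact: (ln_utility_max a0_gt0 a0_sum1 (fun j => p_ge0 _) income_gt0
          x0_ge0 household_budget household_max).
Qed.

Lemma prices_gt0 j : 0 < p j.
Proof.
case: (unliftP ord0 j) => [k|] ->; last by rewrite p01.
exact: (utility_max_prices_gt0 a0_gt0 (fun j => p_ge0 _) income_gt0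
          x0_ge0 household_budget household_max).
Qed.

Lemma output_gt0 i : 0 < y i.
Proof.
rewrite -goods_clear.
have := utility_max_gt0 a0_gt0 (fun j => p_ge0 _) income_gt0 x0_ge0 household_max i.
have : 0 <= \sum_k x k (firm i) by exact: sumr_ge0.
lra.
Qed.

Lemma ln_output i : ln (y i) = ln (lam i) + \sum_j a i j * ln (x i j).
Proof.
have factor_gt0 j : 0 < x i j `^ a i j.
  rewrite lt_def powR_ge0 andbT; apply: contraTneq (output_gt0 i) => factor0.
  by rewrite y_def /prod_fun (bigD1 j) //= factor0 !(mul0r, mulr0) ltxx.
rewrite y_def /prod_fun lnM ?posrE ?lam_gt0 ?prodr_gt0 // ln_prod //.
by congr (_ + _); apply: eq_bigr => j _; rewrite ln_powR.
Qed.

Lemma ln_input i j : a i j * ln (x i j) =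
  xlogx (a i j) + a i j * ln (revenue i) - a i j * ln (p j).
Proof.
have [->|aij_neq0] := eqVneq (a i j) 0; first by rewrite /xlogx eqxx !mul0r; ring.
have aij_gt0 : 0 < a i j by rewrite lt_def aij_neq0 a_ge0.
have -> : x i j = a i j * revenue i / p j.
  by rewrite -expenditure_share mulrAC divff ?mul1r // gt_eqF ?prices_gt0.
rewrite /xlogx (negbTE aij_neq0).
by rewrite ln_div ?lnM ?posrE ?mulr_gt0 ?prices_gt0 ?output_gt0 //; ring.
Qed.

(* Logarithm of y_i = lambda_i prod_j x_{i,j}^{a_{i,j}} after substituting
   x_{i,j} = a_{i,j} v_i / p_j; the labor term drops out because p_0 = 1. *)
Lemma ln_price_balance i :
  ln (p (firm i)) - \sum_j a i (firm j) * ln (p (firm j)) =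
  - uvec a lam i 0 - (\sum_(j < m.+1) a i j - 1) * ln (revenue i).
Proof.
have := ln_output i; rewrite (eq_bigr _ (fun j _ => ln_input i j)).
rewrite sumrB big_split /= -mulr_suml.
rewrite [\sum_(j < m.+1) a i j * ln (p j)]big_ord_recl p01 ln1 mulr0 add0r.
rewrite mxE lnM ?posrE ?prices_gt0 ?output_gt0 // mulrBl mul1r; lra.
Qed.

Lemma log_price_system :
  uvec a lam + Dmx a *m \col_i ln (revenue i) =
  - ((1%:M - Amx a) *m \col_i ln (p (firm i))).
Proof.
apply/colP => i; rewrite mulmxBl mul1mx /Dmx mul_diag_mx !mxE.
rewrite (eq_bigr (fun j => a i (firm j) * ln (p (firm j)))) => [|j _]; last first.
  by rewrite !mxE.
have := ln_price_balance i; rewrite mxE; lra.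
Qed.

End Equilibrium.

Theorem mainTheorem3 (R : realType) (m L : nat) (sec : 'I_m -> 'I_L)
  (b : 'I_m -> 'I_L.+1 -> R) (a0 : 'I_m -> R) (a : 'I_m -> 'I_m.+1 -> R)
  (lam : 'I_m -> R) (x0 : 'I_m -> R) (x : 'I_m -> 'I_m.+1 -> R)
  (p : 'I_m.+1 -> R) (y : 'I_m -> R) :
  economy_ok sec b a0 a lam ->
  equilibrium a0 a lam x0 x p y ->
  p ord0 = 1 ->
  let v := fun i : 'I_m => p (firm i) * y i in
  let v0 := 1 + \sum_(i < m) eps a i * v i in
  let a0r : 'rV[R]_m := \row_j a0 j in
  let Linv := invmx (1%:M - Amx a) in
  let logv : 'cV[R]_m := \col_i ln (v i) in
  (* v0 is household income: wage (labor supply 1) plus all profits *)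
  v0 = p ord0 * 1 + \sum_(i < m) profit lam a p i (x i) /\
  ln (utility a0 x0)
  = ln v0 + \sum_(i < m) xlogx (a0 i)
    + (a0r *m Linv *m uvec a lam) ord0 ord0
    + (a0r *m Linv *m (Dmx a *m logv)) ord0 ord0.
Proof.
move=> eco equi p01 v v0 a0r Linv logv.
split; first exact: (income_eq eco equi p01).
pose lp : 'cV[R]_m := \col_i ln (p (firm i)).
have a0_lp : a0r *m Linv *m uvec a lam + a0r *m Linv *m (Dmx a *m logv) = - (a0r *m lp).
  rewrite -mulmxDr (log_price_system eco equi p01) mulmxN -mulmxA.
  by rewrite mulKmx // (unitmx_1_sub_Amx eco).
have := congr1 (fun M : 'M[R]_1 => M ord0 ord0) a0_lp => /=.
rewrite [LHS]mxE [RHS]mxE [X in - X]mxE.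
under [\sum_j _]eq_bigr do rewrite !mxE.
rewrite (ln_utility_consumption eco equi p01) /ln_indirect_utility; lra.
Qed.
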